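(* Let $X$ be a non-empty topological space. The following are equivalent: (1) $X$ is Baire; (2) \textsc{Alice} does not have a winning strategy in $\mathsf{BM}(X)$; (3) \textsc{Alice} does not have a winning strategy in $\mathsf{BM}_\mathrm{fin}(X)$; (4) \textsc{Alice} does not have a winning strategy in $\mathsf{BM}_\omega(X)$.
   Context: A Baire space is a space in which countable intersections of dense open sets are dense. The Banach–Mazur game $\mathsf{BM}(X)$: \textsc{Alice} and \textsc{Bob} alternately choose non-empty open sets $A_0\supseteq B_0\supseteq A_1\supseteq B_1\supseteq\cdots$, \textsc{Alice} starting; \textsc{Bob} wins if $\bigcap_n B_n\neq\emptyset$, otherwise \textsc{Alice} wins. The game $\mathsf{BM}_\mathrm{fin}(X)$: \textsc{Alice} plays a non-empty open set $A_0$; \textsc{Bob} plays a finite collection $\mathcal{B}_0$ of non-empty open subsets of $A_0$; in inning $n+1$, for each $B \in \mathcal{B}_n$ \textsc{Alice} plays a non-empty open set $A_B \subseteq B$, letting $\mathcal{A}_{n+1}=\{A_B : B\in\mathcal{B}_n\}$, and \textsc{Bob} plays a finite collection $\mathcal{B}_{n+1}$ of non-empty open subsets of $\bigcup\mathcal{A}_{n+1}$; \textsc{Bob} wins if $\bigcap_{n}\bigcup\mathcal{B}_n\neq\emptyset$, otherwise \textsc{Alice} wins. The game $\mathsf{BM}_\omega(X)$ is defined identically to $\mathsf{BM}_\mathrm{fin}(X)$ except that each collection $\mathcal{B}_n$ played by \textsc{Bob} is countable instead of finite. *)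

From HB Require Import structures.
From mathcomp Require Import all_boot all_order all_algebra.
From mathcomp Require Import all_classical all_reals topology.
Set Implicit Arguments. Unset Strict Implicit. Unset Printing Implicit Defensive.
Local Open Scope classical_set_scope.

Definition baire (T : topologicalType) : Prop :=
  forall U : nat -> set T, (forall n, open (U n) /\ dense (U n)) ->
    dense (\bigcap_n U n).

(* ---------------- The Banach--Mazur game BM(X) ----------------
   Alice's strategy: a map from the finite sequence [B_0; ...; B_(n-1)] of
   Bob's previous moves to her move A_n (her own moves are determined by the
   strategy, so this is full information). *)
Section BM.
Variable T : topologicalType.

Definition BM_consistent (sigma : seq (set T) -> set T) (s : seq (set T)) :=
  forall i, (i < size s)%N ->
    [/\ open (nth set0 s i), nth set0 s i !=set0 & nth set0 s i `<=` sigma (take i s)].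

(* sigma always answers legally: a non-empty open set contained in Bob's last
   move (for the empty history, last setT [::] = setT, no constraint). *)
Definition BM_legal (sigma : seq (set T) -> set T) :=
  forall s, BM_consistent sigma s ->
    [/\ open (sigma s), sigma s !=set0 & sigma s `<=` last setT s].

Definition BM_winning (sigma : seq (set T) -> set T) :=
  BM_legal sigma /\
  forall B : nat -> set T, (forall n, BM_consistent sigma (mkseq B n)) ->
    \bigcap_n B n = set0.

Definition Alice_wins_BM : Prop := exists sigma, BM_winning sigma.
End BM.

(* Alice's strategy is a pair (sigma0, sigma): sigma0 = A_0, and
   for a non-empty history h = [B_0; ...; B_n] of Bob's collections and
   B in B_n, sigma h B = A_B. *)
Section BMcoll.
Variable T : topologicalType.
Variable admissible : set (set T) -> Prop.

Definition Alice_coll (sigma0 : set T) (sigma : seq (set (set T)) -> set T -> set T)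
  (h : seq (set (set T))) : set (set T) :=
  match h with
  | [::] => [set sigma0]
  | _ => sigma h @` last set0 h
  end.

Definition Bob_legal (cA cB : set (set T)) :=
  admissible cB /\
  forall B, cB B -> [/\ open B, B !=set0 & B `<=` \bigcup_(A in cA) A].

Definition coll_consistent sigma0 sigma (h : seq (set (set T))) :=
  forall i, (i < size h)%N ->
    Bob_legal (Alice_coll sigma0 sigma (take i h)) (nth set0 h i).

Definition coll_legal sigma0 sigma :=
  forall h, coll_consistent sigma0 sigma h ->
    match h with
    | [::] => open sigma0 /\ sigma0 !=set0
    | _ => forall B, last set0 h B ->
             [/\ open (sigma h B), sigma h B !=set0 & sigma h B `<=` B]
    end.

Definition coll_winning sigma0 sigma :=
  coll_legal sigma0 sigma /\
  forall cB : nat -> set (set T),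
    (forall n, coll_consistent sigma0 sigma (mkseq cB n)) ->
    \bigcap_n (\bigcup_(B in cB n) B) = set0.

Definition Alice_wins_coll : Prop := exists sigma0 sigma, coll_winning sigma0 sigma.
End BMcoll.

Definition Alice_wins_BMfin (T : topologicalType) : Prop :=
  Alice_wins_coll (@finite_set (set T)).
Definition Alice_wins_BMomega (T : topologicalType) : Prop :=
  Alice_wins_coll (@countable (set T)).

From mathcomp Require Import all_boot all_classical topology.
Local Open Scope classical_set_scope.
Set Implicit Arguments. Unset Strict Implicit.

(** Baire implies that Alice has no winning strategy in BM (Oxtoby): given a
    strategy [sigma], Zorn's lemma yields levels [P n] of partial plays of
    length [n] whose answers under [sigma] are pairwise disjoint and have dense
    union in Alice's first move [A0], each level extending the previous one.
    The union of the answers in a level together with the complement of the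
    closure of [A0] is open dense, so by the Baire property some [x] in [A0]
    is in one answer of every level; by disjointness these answers come from a
    single infinite play of Bob, all of whose moves contain [x].
    Conversely, if open dense sets [U n] have an intersection missing an open
    set [O], Alice wins BM_omega by playing [O] and then answering each [B] of
    inning [n + 1] by [B `&` U n].  Finally a winning strategy in BM_omega wins
    BM_fin, as finite collections are countable, and one in BM_fin induces one
    in BM, by letting Bob play singletons. *)

Section BanachMazur.
Variables (T : topologicalType) (sigma : seq (set T) -> set T).
Implicit Types (s : seq (set T)) (P Q : set (seq (set T))).

Lemma BM_consistent_rcons s W : BM_consistent sigma (rcons s W) <->
  BM_consistent sigma s /\ [/\ open W, W !=set0 & W `<=` sigma s].
Proof.
have take_rcons_le i : i <= size s -> take i (rcons s W) = take i s.
  by move=> ?; rewrite -cats1 takel_cat.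
split=> [cons|[cons Wlegal] i].
- split=> [i si|].
    have := cons i; rewrite size_rcons nth_rcons si (take_rcons_le _ (ltnW si)).
    by apply; exact: ltnW.
  have := cons (size s); rewrite size_rcons nth_rcons ltnn eqxx take_rcons_le //.
  by rewrite take_size; apply.
- rewrite size_rcons ltnS leq_eqVlt => /orP[/eqP ->|si].
    by rewrite nth_rcons ltnn eqxx take_rcons_le // take_size.
  by rewrite nth_rcons si (take_rcons_le _ (ltnW si)); apply: cons.
Qed.

Lemma BM_consistent_nil : BM_consistent sigma [::].
Proof. by []. Qed.

Definition disjoint_responses P :=
  forall p q, P p -> P q -> p <> q -> sigma p `&` sigma q = set0.

Definition dense_disjoint_family P :=
  [/\ P `<=` BM_consistent sigma, disjoint_responses P &
      forall O, open O -> O `&` sigma [::] !=set0 ->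
        exists2 p, P p & O `&` sigma p !=set0].

Definition successors P : set (seq (set T)) :=
  [set q | BM_consistent sigma q /\ exists p W, P p /\ q = rcons p W].

Lemma maximal_disjoint_subfamily P :
  exists2 Q, Q `<=` P /\ disjoint_responses Q &
  forall q, P q -> sigma q !=set0 -> exists2 p, Q p & sigma q `&` sigma p !=set0.
Proof.
have [Q [[QP Qdisj] Qmax]] : exists Q, (Q `<=` P /\ disjoint_responses Q) /\
    forall Q', Q `<` Q' -> ~ (Q' `<=` P /\ disjoint_responses Q').
  apply: Zorn_bigcup => F FP Ftot; split; first by move=> q [Q /FP[+ _]]; apply.
  move=> p q [X FX Xp] [Y FY Yq]; have [XY|YX] := Ftot X Y FX FY.
  - exact: (FP Y FY).2 p q (XY _ Xp) Yq.
  - exact: (FP X FX).2 p q Xp (YX _ Yq).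
exists Q => // q Pq [x qx]; apply: contrapT => Qq_disj.
have qQ' p : Q p -> sigma q `&` sigma p = set0.
  move=> Qp; apply/seteqP; split=> // y qpy.
  by apply: Qq_disj; exists p => //; exists y.
have notQq : ~ Q q by move=> Qq; apply: Qq_disj; exists q => //; exists x.
apply: (Qmax (Q `|` [set q])).
  by split=> [p|/(_ q (or_intror erefl))]; [left|].
split=> [p [/QP //|->//]|p p' [Qp|->] [Qp'|->] pp'].
- exact: Qdisj.
- by rewrite setIC; exact: qQ'.
- exact: qQ'.
- by [].
Qed.

Hypothesis sigma_legal : BM_legal sigma.

Lemma successors_dense_disjoint P : dense_disjoint_family P ->
  exists2 Q, dense_disjoint_family Q & Q `<=` successors P.
Proof.
move=> [Pcons _ Pdense].
have [Q [QS Qdisj] Qmax] := maximal_disjoint_subfamily (successors P).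
exists Q => //; split=> [q /QS[] //|//|O oO OA0].
have [p Pp [y [Oy py]]] := Pdense O oO OA0.
have [osp _ _] := sigma_legal (Pcons p Pp).
pose W := O `&` sigma p.
have Wcons : BM_consistent sigma (rcons p W).
  apply/BM_consistent_rcons; split; first exact: Pcons.
  by split; [exact: openI|exists y|apply: subIsetr].
have Wsucc : successors P (rcons p W) by split=> //; exists p, W.
have [_ Wne sW] := sigma_legal Wcons; rewrite last_rcons in sW.
have [q' Qq' [z [qz q'z]]] := Qmax _ Wsucc Wne.
by exists q' => //; exists z; split => //; exact: (sW z qz).1.
Qed.

Lemma dense_disjoint_levels : exists2 P : nat -> set (seq (set T)),
  P 0 = [set [::]] &
  forall n, dense_disjoint_family (P n) /\ P n.+1 `<=` successors (P n).
Proof.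
have [next nextP] : exists next, forall P, dense_disjoint_family P ->
    dense_disjoint_family (next P) /\ next P `<=` successors P.
  suff /choice[next nextP] : forall P, exists Q, dense_disjoint_family P ->
      dense_disjoint_family Q /\ Q `<=` successors P by exists next.
  move=> P; case: (pselect (dense_disjoint_family P)).
    by move=> /successors_dense_disjoint[Q] *; exists Q.
  by move=> notP; exists set0.
have level0 : dense_disjoint_family [set [::]].
  by split=> [_ ->|p q -> ->//|O _ OA0]; [exact: BM_consistent_nil|exists [::]].
exists (fun n => iter n next [set [::]]) => // n.
suff Pn : dense_disjoint_family (iter n next [set [::]]).
  by split=> //; exact: (nextP _ Pn).2.
by elim: n => //= n /nextP[].
Qed.

Lemma dense_disjoint_family_open_dense P : dense_disjoint_family P ->
  let V := \bigcup_(p in P) sigma p `|` ~` closure (sigma [::]) in open V /\ dense V.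
Proof.
move=> [Pcons _ Pdense]; split.
  apply: openU; last exact/closed_openC/closed_closure.
  by apply: bigcup_open => p /Pcons/sigma_legal[].
move=> O [y Oy] oO; have [OA0|OA0] := pselect (O `&` sigma [::] !=set0).
  have [p Pp [z [Oz pz]]] := Pdense O oO OA0.
  by exists z; split=> //; left; exists p.
exists y; split=> //; right=> /(_ O (open_nbhs_nbhs (conj oO Oy))) [z [A0z Oz]].
by apply: OA0; exists z.
Qed.

Lemma successors_trace P q x : successors P q -> sigma q x ->
  exists p W, [/\ P p, q = rcons p W, W x & sigma p x].
Proof.
move=> [qcons [p [W [Pp qE]]]] qx; subst q; exists p, W.
have [_ _] := sigma_legal qcons; rewrite last_rcons => /(_ x qx) Wx.
by move: qcons => /BM_consistent_rcons[_ [_ _ /(_ x Wx)]].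
Qed.

Lemma disjoint_responses_eq P p q x : disjoint_responses P -> P p -> P q ->
  sigma p x -> sigma q x -> p = q.
Proof.
move=> Pdisj Pp Pq px qx; apply: contrapT => /(Pdisj _ _ Pp Pq) /seteqP[pq _].
exact: (pq x).
Qed.

Lemma baire_BM_surviving_play : baire T ->
  exists2 B : nat -> set T,
    forall n, BM_consistent sigma (mkseq B n) & \bigcap_n B n !=set0.
Proof.
move=> baireT; have [P P0 Plevels] := dense_disjoint_levels.
have [oA0 [a A0a] _] := sigma_legal BM_consistent_nil.
have Vod n := dense_disjoint_family_open_dense (Plevels n).1.
have [x [A0x Vx]] := baireT _ Vod _ (ex_intro _ a A0a) oA0.
have /choice[p Pp] : forall n, exists q, P n q /\ sigma q x.
  move=> n; have [[q Pq qx]|/(_ (subset_closure A0x))//] := Vx n I.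
  by exists q.
have pS n : exists2 W, p n.+1 = rcons (p n) W & W x.
  have [[_ Pdisj _] Psn] := Plevels n; have [Psp psx] := Pp n.+1.
  have [q [W [Pq -> Wx qx]]] := successors_trace (Psn _ Psp) psx.
  by exists W => //; rewrite (disjoint_responses_eq Pdisj Pq (Pp n).1 qx (Pp n).2).
pose B n := last setT (p n.+1).
have pE n : p n = mkseq B n.
  elim: n => [|n IHn]; first by have := (Pp 0).1; rewrite P0.
  by rewrite mkseqS -IHn /B; have [W -> _] := pS n; rewrite last_rcons.
exists B.
  by move=> n; rewrite -pE; have [[Pcons _ _] _] := Plevels n; exact/Pcons/(Pp n).1.
by exists x => n _; rewrite /B; have [W -> Wx] := pS n; rewrite last_rcons.
Qed.

End BanachMazur.

Lemma take_mkseq (X : Type) (f : nat -> X) m n : m <= n ->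
  take m (mkseq f n) = mkseq f m.
Proof. by move=> mn; rewrite /mkseq -map_take take_iota (minn_idPl mn). Qed.

Section CollectionGames.
Variable T : topologicalType.
Implicit Types (adm : set (set (set T))) (sg : seq (set (set T)) -> set T -> set T).

Lemma Alice_coll_rcons (A0 : set T) sg h c :
  Alice_coll A0 sg (rcons h c) = sg (rcons h c) @` c.
Proof. by case: h => [|a h] //=; rewrite last_rcons. Qed.

Lemma coll_consistent_sub adm1 adm2 (A0 : set T) sg h : adm1 `<=` adm2 ->
  coll_consistent adm1 A0 sg h -> coll_consistent adm2 A0 sg h.
Proof. by move=> adm12 cons1 i ih; have [/adm12 ? ?] := cons1 i ih. Qed.

Lemma Alice_wins_coll_sub adm1 adm2 : adm1 `<=` adm2 ->
  Alice_wins_coll adm2 -> Alice_wins_coll adm1.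
Proof.
move=> adm12 [A0 [sg [legal win]]]; exists A0, sg; split.
- by move=> h /(coll_consistent_sub adm12) /legal.
- by move=> cB cons; apply: win => n; apply: coll_consistent_sub (cons n).
Qed.

Lemma not_baire_Alice_wins_coll adm : ~ baire T -> Alice_wins_coll adm.
Proof.
move=> /existsNP[U /not_implyP[Uod /denseNE[O [[y [oO Oy]] OU]]]].
exists O, (fun h B => B `&` U (size h).-1); split.
  case=> [|B0 h] cons; first by split => //; exists y.
  move=> B; rewrite -(nth_last set0) /=.
  have [_ /[apply] [[oB nB _]]] := cons (size h) (ltnSn _).
  by split; [apply: openI; case: (Uod (size h))|exact: (Uod _).2|move=> z []].
move=> cB cons.
have inU n : \bigcup_(B in cB n.+1) B `<=` U n.
  move=> z [B cBB Bz].
  have := cons n.+2 n.+1; rewrite size_mkseq => /(_ (ltnSn _)) [_ /(_ B)].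
  rewrite nth_mkseq // take_mkseq // mkseqS Alice_coll_rcons size_rcons size_mkseq.
  by move=> /(_ cBB) [_ _ /(_ z Bz) [_ [B' _ <-] []]].
have inO : \bigcup_(B in cB 0) B `<=` O.
  move=> z [B cBB Bz].
  by have [_ /(_ B cBB) [_ _ /(_ z Bz) [_ -> ]]] := cons 1 0 isT.
apply/seteqP; split => // z z_cap; rewrite -OU; split; first exact/inO/z_cap.
by move=> n _; apply/inU/z_cap.
Qed.

Lemma Alice_wins_coll_BM adm : (forall B : set T, adm [set B]) ->
  Alice_wins_coll adm -> Alice_wins_BM T.
Proof.
move=> adm1 [A0 [sg [legal win]]].
pose single := map (fun B : set T => [set B]).
pose tau s := if s is [::] then A0 else sg (single s) (last set0 s).
have bigcup_Alice_coll s : \bigcup_(A in Alice_coll A0 sg (single s)) A = tau s.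
  case/lastP: s => [|s b]; first by rewrite bigcup_set1.
  rewrite /single map_rcons Alice_coll_rcons -map_rcons image_set1 bigcup_set1.
  by rewrite /tau; case: s => [|a s] //=; rewrite last_rcons.
have cons s : BM_consistent tau s -> coll_consistent adm A0 sg (single s).
  move=> tau_cons i; rewrite size_map => si; rewrite (nth_map set0) //.
  split=> // B ->; rewrite -map_take bigcup_Alice_coll; exact: tau_cons.
exists tau; split.
  move=> [|b s] /cons /legal /=; first by case.
  by move=> /(_ (last b s)); rewrite (last_map (fun B => [set B])); apply.
move=> B tau_cons.
have <- : \bigcap_n \bigcup_(B' in [set B n]) B' = \bigcap_n B n.
  by apply: eq_bigcapr => n _; rewrite bigcup_set1.
apply: win => n; rewrite /mkseq (map_comp (fun C => [set C]) B).
exact/cons/tau_cons.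
Qed.

End CollectionGames.

Theorem corollary3p3 (T : topologicalType) (HT : [set: T] !=set0) :
  [<-> baire T; ~ Alice_wins_BM T; ~ Alice_wins_BMfin T; ~ Alice_wins_BMomega T].
Proof.
tfae.
- move=> baireT [sigma [legal win]].
  have [B Bcons [x Bx]] := baire_BM_surviving_play legal baireT.
  by have := win B Bcons; rewrite -subset0 => /(_ x Bx).
- by move=> noBM /(Alice_wins_coll_BM (@finite_set1 _)).
- by move=> noBMfin /(Alice_wins_coll_sub (@finite_set_countable _)).
- move=> noBMomega; apply: contrapT => notbaire.
  exact/noBMomega/not_baire_Alice_wins_coll.
Qed.
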